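(* Let $R$ be a commutative ring. An ideal $I$ of $R$ is 2-absorbing if and only if it is strongly 2-absorbing.
   Context: All rings are commutative with identity $1\neq 0$. An ideal $I$ of $R$ is 2-absorbing if whenever $a,b,c\in R$ and $abc\in I$, then $ab\in I$ or $ac\in I$ or $bc\in I$. An ideal $I$ of $R$ is strongly 2-absorbing if whenever $I_1,I_2,I_3$ are ideals of $R$ with $I_1I_2I_3\subseteq I$, then $I_1I_2\subseteq I$ or $I_1I_3\subseteq I$ or $I_2I_3\subseteq I$. *)

From mathcomp Require Import all_boot all_order all_algebra.
Set Implicit Arguments. Unset Strict Implicit. Unset Printing Implicit Defensive.
Import GRing.Theory.
Local Open Scope ring_scope.

Definition is_ideal (R : comNzRingType) (I : R -> Prop) : Prop :=
  [/\ I 0, (forall x y, I x -> I y -> I (x + y)) & (forall r x, I x -> I (r * x))].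

Definition ideal_sub (R : comNzRingType) (I J : R -> Prop) : Prop :=
  forall x, I x -> J x.

Definition ideal_mul (R : comNzRingType) (I J : R -> Prop) : R -> Prop :=
  fun z => exists (n : nat) (a b : 'I_n -> R),
    [/\ forall i, I (a i), forall i, J (b i) & z = \sum_(i < n) a i * b i].

Definition two_absorbing (R : comNzRingType) (I : R -> Prop) : Prop :=
  forall a b c : R, I (a * b * c) -> I (a * b) \/ I (a * c) \/ I (b * c).

Definition strongly_two_absorbing (R : comNzRingType) (I : R -> Prop) : Prop :=
  forall I1 I2 I3 : R -> Prop, is_ideal I1 -> is_ideal I2 -> is_ideal I3 ->
    ideal_sub (ideal_mul (ideal_mul I1 I2) I3) I ->
    ideal_sub (ideal_mul I1 I2) I \/ ideal_sub (ideal_mul I1 I3) I \/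
    ideal_sub (ideal_mul I2 I3) I.

(** Rephrase "J K ⊆ I" as "J ⊆ (I : K)", where the colon (I : K) is again an ideal.
    The key fact is that an additively closed set covered by two ideals lies in one
    of them.  Applying it three times, with one more ideal in place of an element
    each time, takes the 2-absorbing condition on elements a b c to the one on
    ideals I1 I2 I3.  Conversely, the strong condition for the principal ideals
    Ra, Rb, Rc gives the condition for a, b, c. *)

From mathcomp Require Import all_boot all_order all_algebra.
From Stdlib Require Import Classical.
From mathcomp Require Import ring.
Set Implicit Arguments. Unset Strict Implicit. Unset Printing Implicit Defensive.
Import GRing.Theory.
Local Open Scope ring_scope.

Section Ideals.
Variable R : comNzRingType.
Implicit Types (I J K L P Q : R -> Prop) (a x y : R).

Definition add_closed J := forall x y, J x -> J y -> J (x + y).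

Definition colon I K : R -> Prop := fun x => forall k, K k -> I (x * k).

Definition principal a : R -> Prop := fun x => exists r, x = r * a.

Lemma ideal_addKr I x y : is_ideal I -> I x -> I (x + y) -> I y.
Proof.
case=> _ ID IM Ix Ixy; rewrite -(addKr x y).
by apply: ID => //; rewrite -mulN1r; apply: IM.
Qed.

Lemma colon_ideal I K : is_ideal I -> is_ideal (colon I K).
Proof.
case=> I0 ID IM; split=> [k _|x y Ix Iy k Kk|r x Ix k Kk].
- by rewrite mul0r.
- by rewrite mulrDl; apply: ID; [apply: Ix | apply: Iy].
- by rewrite -mulrA; apply: IM; apply: Ix.
Qed.

Lemma mull_preim_ideal I a : is_ideal I -> is_ideal (fun x => I (a * x)).
Proof.
case=> I0 ID IM; split=> [|x y Ix Iy|r x Ix].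
- by rewrite mulr0.
- by rewrite mulrDr; apply: ID.
- by rewrite mulrCA; apply: IM.
Qed.

Lemma principal_ideal a : is_ideal (principal a).
Proof.
split=> [|_ _ [r ->] [s ->]|r _ [s ->]].
- by exists 0; rewrite mul0r.
- by exists (r + s); rewrite mulrDl.
- by exists (r * s); rewrite mulrA.
Qed.

Lemma principal_self a : principal a a.
Proof. by exists 1; rewrite mul1r. Qed.

Lemma ideal_mul_mem J K x y : J x -> K y -> ideal_mul J K (x * y).
Proof.
by move=> Jx Ky; exists 1%N, (fun=> x), (fun=> y); split=> //; rewrite big_ord1.
Qed.

Lemma ideal_mul_subP I J K :
  is_ideal I -> ideal_sub (ideal_mul J K) I <-> ideal_sub J (colon I K).
Proof.
move=> [I0 ID _]; split=> [JKI x Jx k Kk|JIK _ [n [a [b [Ja Kb ->]]]]].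
  exact/JKI/ideal_mul_mem.
by apply: (big_ind I) => // i _; apply: JIK.
Qed.

Lemma ideal_mul3_subP I J K L : is_ideal I ->
  ideal_sub (ideal_mul (ideal_mul J K) L) I <-> ideal_sub J (colon (colon I L) K).
Proof.
move=> idI; rewrite ideal_mul_subP //.
exact/ideal_mul_subP/colon_ideal.
Qed.

Lemma add_closed_sub_union2 J P Q : add_closed J -> is_ideal P -> is_ideal Q ->
  (forall x, J x -> P x \/ Q x) -> ideal_sub J P \/ ideal_sub J Q.
Proof.
move=> DJ idP idQ JPQ; apply: NNPP => /not_or_and[/not_all_ex_not[x nJP]].
move=> /not_all_ex_not[y nJQ].
have [Jx nPx] := imply_to_and _ _ nJP; have [Jy nQy] := imply_to_and _ _ nJQ.
have Qx : Q x by case: (JPQ x Jx).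
have Py : P y by case: (JPQ y Jy).
case: (JPQ _ (DJ _ _ Jy Jx)) => [Pyx|Qyx].
- exact/nPx/(ideal_addKr idP Py).
- by rewrite addrC in Qyx; exact/nQy/(ideal_addKr idQ Qx).
Qed.

End Ideals.

Section TwoAbsorbing.
Variables (R : comNzRingType) (I : R -> Prop).
Hypotheses (idI : is_ideal I) (absI : two_absorbing I).

Lemma two_absorbing_elt_elt_ideal a b J : add_closed J ->
  colon I J (a * b) -> I (a * b) \/ colon I J a \/ colon I J b.
Proof.
move=> DJ abJ; case: (classic (I (a * b))) => [|nab]; first by left.
right; apply: add_closed_sub_union2 (mull_preim_ideal _ idI) (mull_preim_ideal _ idI) _
  => // j Jj.
by case: (absI (abJ j Jj)).
Qed.

Lemma two_absorbing_elt_ideal_ideal a J K : add_closed J -> add_closed K ->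
  colon (colon I K) J a -> colon I J a \/ colon I K a \/ ideal_sub J (colon I K).
Proof.
move=> DJ DK aJK; case: (classic (colon I K a)) => [|naK]; first by right; left.
have [aJ|JK] : ideal_sub J (fun j => I (a * j)) \/ ideal_sub J (colon I K).
- apply: add_closed_sub_union2 (mull_preim_ideal _ idI) (colon_ideal _ idI) _ => // j Jj.
  by case: (two_absorbing_elt_elt_ideal DK (aJK j Jj)) => [|[|]]; auto.
- by left.
- by right; right.
Qed.

Lemma two_absorbing_ideal_ideal_ideal I1 I2 I3 :
  add_closed I1 -> add_closed I2 -> add_closed I3 ->
  ideal_sub I1 (colon (colon I I3) I2) ->
  [\/ ideal_sub I1 (colon I I2), ideal_sub I1 (colon I I3) | ideal_sub I2 (colon I I3)].
Proof.
move=> D1 D2 D3 I123; case: (classic (ideal_sub I2 (colon I I3))) => [|n23].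
  exact: Or33.
have [I12|I13] : ideal_sub I1 (colon I I2) \/ ideal_sub I1 (colon I I3).
- apply: add_closed_sub_union2 (colon_ideal _ idI) (colon_ideal _ idI) _ => // x I1x.
  by case: (two_absorbing_elt_ideal_ideal D2 D3 (I123 x I1x)) => [|[|]]; auto.
- exact: Or31.
- exact: Or32.
Qed.

End TwoAbsorbing.

Lemma two_absorbing_of_strongly (R : comNzRingType) (I : R -> Prop) :
  is_ideal I -> strongly_two_absorbing I -> two_absorbing I.
Proof.
move=> idI sabsI a b c Iabc.
have sub3 : ideal_sub (ideal_mul (ideal_mul (principal a) (principal b)) (principal c)) I.
  apply/ideal_mul3_subP => // _ [r ->] _ [s ->] _ [t ->].
  have -> : r * a * (s * b) * (t * c) = r * s * t * (a * b * c) by ring.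
  by case: idI => _ _ IM; apply: IM.
have pa := principal_ideal a; have pb := principal_ideal b; have pc := principal_ideal c.
have mem u v : ideal_sub (ideal_mul (principal u) (principal v)) I -> I (u * v).
  by move=> uvI; apply/uvI/ideal_mul_mem; apply: principal_self.
by case: (sabsI _ _ _ pa pb pc sub3) => [/mem|[/mem|/mem]]; auto.
Qed.

Theorem theorem2p13 (R : comNzRingType) (I : R -> Prop) :
  is_ideal I -> (two_absorbing I <-> strongly_two_absorbing I).
Proof.
move=> idI; split; last exact: two_absorbing_of_strongly.
move=> absI I1 I2 I3 [_ D1 _] [_ D2 _] [_ D3 _] /(ideal_mul3_subP _ _ _ idI) I123.
case: (two_absorbing_ideal_ideal_ideal idI absI D1 D2 D3 I123) => I_sub.
- by left; apply/ideal_mul_subP.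
- by right; left; apply/ideal_mul_subP.
- by right; right; apply/ideal_mul_subP.
Qed.
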